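(* Let $f_1$ admit a Taylor expansion $f_1(t)=\sum_{m\ge0}b_mt^m$ on $[-1,1]$ with coefficients satisfying $c_2r^m\le b_m\le c_1r^m$ for all $m\ge0$, for some constants $0<r<1$ and $0<c_2\le c_1$. Then for every integer $\alpha\ge1$ there exist constants $C_{1,\alpha},C_{2,\alpha}>0$ (depending only on $\alpha$, $d$, and the constants $r,c_1,c_2$) such that for all $m\ge0$ $$C_{2,\alpha}\Big(\frac r4\Big)^m\le\lambda_{m,\alpha}\le C_{1,\alpha}(m+1)^{\alpha-1}r^m.$$
   Context: $d\ge2$; $|S^{d-2}|$ is the surface area of the unit sphere $S^{d-2}$. For integers $k,\alpha\ge0$, $b_{j,\alpha}$ denotes the coefficient of $t^j$ in the power series of $f_1^\alpha$, and $$\lambda_{k,\alpha}=\frac{|S^{d-2}|\Gamma((d-1)/2)}{2^{k+1}}\sum_{s\ge0}b_{2s+k,\alpha}\frac{(2s+k)!}{(2s)!}\frac{\Gamma(s+1/2)}{\Gamma(s+k+d/2)}$$ (this is the eigenvalue of the integral operator of the dot-product kernel $(x,x')\mapsto f_1^\alpha(\langle x,x'\rangle)$ on $L_2(S^{d-1},\sigma_{d-1})$ on spherical harmonics of degree $k$). *)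

From Stdlib Require Import Reals Lra Lia Arith Factorial.
Open Scope R_scope.

(* halfGamma n = Gamma(n/2) for n >= 1 (Gamma(1/2) = sqrt PI, Gamma(1) = 1,
   Gamma(x+1) = x Gamma(x)).  The value at n = 0 is junk and never used. *)
Fixpoint halfGamma (n : nat) : R :=
  match n with
  | O => 0
  | S O => sqrt PI
  | S (S O) => 1
  | S (S m) => (INR m / 2) * halfGamma m
  end.

(* |S^{d-2}| = 2 pi^{(d-1)/2} / Gamma((d-1)/2)  (for d = 2: |S^0| = 2). *)
Definition sphere_area (d : nat) : R :=
  2 * sqrt PI ^ (d - 1) / halfGamma (d - 1).

(* Coefficients of the power series of f_1^alpha, given the coefficient
   sequence b of f_1: alpha-fold Cauchy product. *)
Fixpoint coef_pow (b : nat -> R) (alpha : nat) (j : nat) : R :=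
  match alpha with
  | O => if Nat.eqb j 0 then 1 else 0
  | S a => sum_f_R0 (fun i => b i * coef_pow b a (j - i)%nat) j
  end.

Definition lambda_pref (d k : nat) : R :=
  sphere_area d * halfGamma (d - 1) / 2 ^ (k + 1).

Definition lambda_term (d : nat) (b : nat -> R) (alpha k s : nat) : R :=
  coef_pow b alpha (2 * s + k)
  * (INR (Factorial.fact (2 * s + k)) / INR (Factorial.fact (2 * s)))
  * (halfGamma (2 * s + 1) / halfGamma (2 * s + 2 * k + d)).

Definition is_lambda (d : nat) (b : nat -> R) (alpha k : nat) (l : R) : Prop :=
  infinite_sum (fun s => lambda_pref d k * lambda_term d b alpha k s) l.

From Stdlib Require Import Reals Lra Lia Factorial.
Open Scope R_scope.

(* The eigenvalue is a series of nonnegative terms.  By the duplication formula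
   Gamma(s+1/2) = (2s)! sqrt(pi) / (4^s s!) and Gamma(s+k+d/2) >= (s+k)! Gamma(d/2),
   the factorial/Gamma factor of the s-th term is at most 2^k sqrt(pi) / Gamma(d/2),
   and the Cauchy-product coefficient satisfies
   c2^alpha r^j <= b_{j,alpha} <= c1^alpha (j+1)^(alpha-1) r^j.  Hence the s-th term
   is at most a constant times (k+1)^(alpha-1) r^k r^s, whose sum is geometric.
   For the lower bound keep only the term s = 0 and use
   Gamma(k+d/2) <= 2^(k+d) k! Gamma(d/2). *)

Lemma pow_pred (x : R) (n : nat) : (1 <= n)%nat -> x ^ n = x * x ^ (n - 1).
Proof. intro Hn. replace n with (S (n - 1)) at 1 by lia. reflexivity. Qed.

Lemma Rdiv_le_cross (a b c e : R) : 0 < b -> 0 < e -> a * e <= c * b -> a / b <= c / e.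
Proof.
  intros Hb He H.
  replace (a / b) with (a * e * / (b * e)) by (field; lra).
  replace (c / e) with (c * b * / (b * e)) by (field; lra).
  apply Rmult_le_compat_r; [left; apply Rinv_0_lt_compat; nra | exact H].
Qed.

Lemma sum_f_R0_ge_term (f : nat -> R) (N i : nat) :
  (forall n, 0 <= f n) -> (i <= N)%nat -> f i <= sum_f_R0 f N.
Proof.
  intro Hf. induction N as [|N IH]; intro Hi.
  - replace i with 0%nat by lia. simpl. lra.
  - rewrite tech5. pose proof (Hf (S N)).
    destruct (Nat.eq_dec i (S N)) as [->|Hne].
    + pose proof (cond_pos_sum f N Hf). lra.
    + assert (f i <= sum_f_R0 f N) by (apply IH; lia). lra.
Qed.

Lemma C_nonneg (n k : nat) : 0 <= C n k.
Proof.
  unfold C. pose proof (INR_fact_lt_0 n). pose proof (INR_fact_lt_0 k).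
  pose proof (INR_fact_lt_0 (n - k)).
  apply Rlt_le, Rdiv_lt_0_compat; nra.
Qed.

Lemma halfGamma_add2 (n : nat) : (1 <= n)%nat -> halfGamma (n + 2) = INR n / 2 * halfGamma n.
Proof.
  intro Hn. destruct n as [|n]; [lia|].
  replace (S n + 2)%nat with (S (S (S n))) by lia. reflexivity.
Qed.

Lemma halfGamma_pos (n : nat) : (1 <= n)%nat -> 0 < halfGamma n.
Proof.
  assert (Hpair : forall m, 0 < halfGamma (S m) /\ 0 < halfGamma (S (S m))).
  { induction m as [|m [IH1 IH2]].
    - split; simpl; [apply sqrt_lt_R0, PI_RGT_0 | lra].
    - split; [exact IH2|].
      replace (S (S (S m))) with (S m + 2)%nat by lia.
      rewrite halfGamma_add2 by lia.
      pose proof (lt_0_INR (S m) ltac:(lia)). nra. }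
  intro Hn. destruct n as [|n]; [lia | apply Hpair].
Qed.

Lemma halfGamma_odd (s : nat) :
  halfGamma (2 * s + 1) = INR (fact (2 * s)) * sqrt PI / (4 ^ s * INR (fact s)).
Proof.
  induction s as [|s IH].
  - simpl. field.
  - replace (2 * S s + 1)%nat with ((2 * s + 1) + 2)%nat by lia.
    rewrite halfGamma_add2, IH by lia.
    replace (2 * S s)%nat with (S (S (2 * s))) by lia.
    rewrite !fact_simpl, !mult_INR, !S_INR, plus_INR, mult_INR. simpl.
    pose proof (INR_fact_lt_0 s). pose proof (INR_fact_lt_0 (2 * s)).
    pose proof (pos_INR s). pose proof (pow_lt 4 s ltac:(lra)).
    replace (s + (s + 0))%nat with (2 * s)%nat by lia.
    field. lra.
Qed.

Lemma halfGamma_shift_ge (d m : nat) : (2 <= d)%nat ->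
  INR (fact m) * halfGamma d <= halfGamma (2 * m + d).
Proof.
  intro Hd. induction m as [|m IH].
  - simpl. lra.
  - replace (2 * S m + d)%nat with ((2 * m + d) + 2)%nat by lia.
    rewrite halfGamma_add2, fact_simpl, mult_INR by lia.
    assert (0 <= INR (fact m) * halfGamma d).
    { pose proof (INR_fact_lt_0 m). pose proof (halfGamma_pos d ltac:(lia)). nra. }
    assert (INR (S m) <= INR (2 * m + d) / 2).
    { rewrite S_INR, plus_INR, mult_INR. apply le_INR in Hd. simpl in *. lra. }
    rewrite Rmult_assoc. apply Rmult_le_compat; auto using pos_INR.
Qed.

Lemma halfGamma_shift_le (d m : nat) : (2 <= d)%nat ->
  halfGamma (2 * m + d) * INR (fact d) <= halfGamma d * INR (fact (m + d)).
Proof.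
  intro Hd. induction m as [|m IH].
  - simpl. lra.
  - replace (2 * S m + d)%nat with ((2 * m + d) + 2)%nat by lia.
    replace (S m + d)%nat with (S (m + d)) by lia.
    rewrite halfGamma_add2, fact_simpl, mult_INR by lia.
    assert (0 <= halfGamma (2 * m + d) * INR (fact d)).
    { pose proof (INR_fact_lt_0 d). pose proof (halfGamma_pos (2 * m + d) ltac:(lia)). nra. }
    assert (0 <= INR (2 * m + d) / 2 <= INR (S (m + d))).
    { rewrite S_INR, !plus_INR, mult_INR. pose proof (pos_INR m). pose proof (pos_INR d).
      simpl. lra. }
    pose proof (halfGamma_pos d ltac:(lia)). pose proof (pos_INR (S (m + d))).
    nra.
Qed.

(* The binomial coefficient C (a+b) a is one term of the expansion of (1+1)^(a+b). *)
Lemma fact_add_le (a b : nat) :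
  INR (fact (a + b)) <= 2 ^ (a + b) * INR (fact a) * INR (fact b).
Proof.
  assert (HC : C (a + b) a <= 2 ^ (a + b)).
  { replace 2 with (1 + 1) by lra. rewrite binomial.
    eapply Rle_trans; [| apply (sum_f_R0_ge_term _ _ a)].
    - simpl. rewrite !pow1. lra.
    - intro n. rewrite !pow1, !Rmult_1_r. apply C_nonneg.
    - lia. }
  unfold C in HC. replace (a + b - a)%nat with b in HC by lia.
  pose proof (INR_fact_lt_0 a). pose proof (INR_fact_lt_0 b).
  unfold Rdiv in HC. apply (Rmult_le_compat_r (INR (fact a) * INR (fact b))) in HC; [|nra].
  rewrite Rmult_assoc, Rinv_l in HC by nra. lra.
Qed.

Lemma halfGamma_shift_le_pow (d m : nat) : (2 <= d)%nat ->
  halfGamma (2 * m + d) <= 2 ^ (m + d) * INR (fact m) * halfGamma d.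
Proof.
  intro Hd.
  pose proof (halfGamma_shift_le d m Hd). pose proof (fact_add_le m d).
  pose proof (halfGamma_pos d ltac:(lia)). pose proof (INR_fact_lt_0 d).
  apply Rmult_le_reg_r with (INR (fact d)); nra.
Qed.

Lemma coef_pow_nonneg (b : nat -> R) (a j : nat) :
  (forall m, 0 <= b m) -> 0 <= coef_pow b a j.
Proof.
  intro Hb. revert j. induction a as [|a IH]; intro j; simpl.
  - destruct (Nat.eqb j 0); lra.
  - apply cond_pos_sum. intro n. apply Rmult_le_pos; auto.
Qed.

Lemma coef_pow_1 (b : nat -> R) (j : nat) : coef_pow b 1 j = b j.
Proof.
  change (coef_pow b 1 j)
    with (sum_f_R0 (fun i => b i * (if Nat.eqb (j - i) 0 then 1 else 0)) j).
  destruct j as [|j].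
  - simpl. ring.
  - rewrite tech5, Nat.sub_diag, Nat.eqb_refl.
    rewrite (sum_eq _ (fun _ => 0)).
    + rewrite sum_cte. ring.
    + intros i Hi. replace (S j - i =? 0)%nat with false by (symmetry; apply Nat.eqb_neq; lia).
      ring.
Qed.

Section CoefPowBounds.
Variables (b : nat -> R) (r c1 c2 : R).
Hypothesis Hr : 0 < r.
Hypothesis Hc2 : 0 < c2.
Hypothesis Hb : forall m, c2 * r ^ m <= b m <= c1 * r ^ m.

Lemma coef_nonneg_of_geom_bounds (m : nat) : 0 <= b m.
Proof. pose proof (Hb m). pose proof (pow_lt r m Hr). nra. Qed.

Lemma coef_pow_ge (a j : nat) : c2 ^ S a * r ^ j <= coef_pow b (S a) j.
Proof.
  revert j. induction a as [|a IH]; intro j.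
  - rewrite coef_pow_1. simpl. pose proof (Hb j). lra.
  - change (coef_pow b (S (S a)) j)
      with (sum_f_R0 (fun i => b i * coef_pow b (S a) (j - i)) j).
    apply Rle_trans with (b 0%nat * coef_pow b (S a) (j - 0)).
    + rewrite Nat.sub_0_r. pose proof (Hb 0%nat) as Hb0. simpl in Hb0.
      pose proof (IH j).
      assert (0 < c2 ^ S a * r ^ j) by (apply Rmult_lt_0_compat; apply pow_lt; lra).
      change (c2 ^ S (S a)) with (c2 * c2 ^ S a). nra.
    + apply (sum_f_R0_ge_term (fun i => b i * coef_pow b (S a) (j - i))); [| lia].
      intro n. apply Rmult_le_pos;
        [apply coef_nonneg_of_geom_bounds | apply coef_pow_nonneg, coef_nonneg_of_geom_bounds].
Qed.

Lemma coef_pow_le (a j : nat) :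
  coef_pow b (S a) j <= c1 ^ S a * r ^ j * INR (j + 1) ^ a.
Proof.
  assert (Hc1 : 0 < c1) by (pose proof (Hb 0%nat); simpl in *; lra).
  revert j. induction a as [|a IH]; intro j.
  - rewrite coef_pow_1. simpl. pose proof (Hb j). lra.
  - change (coef_pow b (S (S a)) j)
      with (sum_f_R0 (fun i => b i * coef_pow b (S a) (j - i)) j).
    apply Rle_trans with (sum_f_R0 (fun _ => c1 ^ S (S a) * r ^ j * INR (j + 1) ^ a) j).
    + apply sum_Rle. intros i Hi.
      assert (Hpow : INR (j - i + 1) ^ a <= INR (j + 1) ^ a).
      { apply pow_incr. split; [apply pos_INR | apply le_INR; lia]. }
      assert (Hsplit : r ^ j = r ^ i * r ^ (j - i)).
      { rewrite <- pow_add. f_equal. lia. }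
      pose proof (IH (j - i)%nat). pose proof (Hb i).
      pose proof (coef_pow_nonneg b (S a) (j - i) coef_nonneg_of_geom_bounds).
      pose proof (pow_lt r i Hr). pose proof (pow_lt r (j - i) Hr).
      pose proof (pow_lt c1 (S a) Hc1). pose proof (pow_le (INR (j - i + 1)) a (pos_INR _)).
      rewrite Hsplit. change (c1 ^ S (S a)) with (c1 * c1 ^ S a).
      apply Rle_trans with (c1 * r ^ i * (c1 ^ S a * r ^ (j - i) * INR (j - i + 1) ^ a)).
      * apply Rmult_le_compat; try lra. apply coef_nonneg_of_geom_bounds.
      * replace (c1 * r ^ i * (c1 ^ S a * r ^ (j - i) * INR (j - i + 1) ^ a))
          with (c1 * r ^ i * (c1 ^ S a * r ^ (j - i)) * INR (j - i + 1) ^ a) by ring.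
        replace (c1 * c1 ^ S a * (r ^ i * r ^ (j - i)) * INR (j + 1) ^ a)
          with (c1 * r ^ i * (c1 ^ S a * r ^ (j - i)) * INR (j + 1) ^ a) by ring.
        apply Rmult_le_compat_l; [apply Rmult_le_pos; apply Rmult_le_pos; lra | exact Hpow].
    + rewrite sum_cte. replace (INR (S j)) with (INR (j + 1)) by (f_equal; lia).
      simpl. lra.
Qed.

End CoefPowBounds.

Lemma bernoulli_ineq (e : R) (n : nat) : 0 <= e <= 1 -> 1 - INR n * e <= (1 - e) ^ n.
Proof.
  intro He. induction n as [|n IH].
  - simpl. lra.
  - rewrite S_INR. simpl. pose proof (pow_le (1 - e) n ltac:(lra)).
    pose proof (pos_INR n). nra.
Qed.

Lemma succ_mul_pow_le (t : R) (n : nat) : 0 <= t < 1 -> INR (n + 1) * t ^ n <= / (1 - t).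
Proof.
  intro Ht.
  assert (Hsum : INR (n + 1) * t ^ n <= sum_f_R0 (fun i => t ^ i) n).
  { induction n as [|n IH].
    - simpl. lra.
    - rewrite tech5. replace (INR (S n + 1)) with (INR (n + 1) + 1)
        by (rewrite <- S_INR; f_equal; lia).
      simpl. pose proof (pow_le t n ltac:(lra)).
      assert (0 <= INR (n + 1) * t ^ n) by (apply Rmult_le_pos; [apply pos_INR | lra]).
      assert (t * (INR (n + 1) * t ^ n) <= INR (n + 1) * t ^ n) by nra.
      lra. }
  rewrite tech3 in Hsum by lra.
  pose proof (pow_le t (S n) ltac:(lra)).
  eapply Rle_trans; [exact Hsum|].
  unfold Rdiv. rewrite <- (Rmult_1_l (/ (1 - t))) at 2.
  apply Rmult_le_compat_r; [left; apply Rinv_0_lt_compat |]; lra.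
Qed.

(* Pick t < 1 with r <= t^(p+1) (Bernoulli); then (n+1)^p r^n <= ((n+1) t^n)^p <= (1-t)^-p. *)
Lemma pow_mul_geom_bounded (r : R) (p : nat) : 0 <= r < 1 ->
  exists M, 0 < M /\ forall n, INR (n + 1) ^ p * r ^ n <= M.
Proof.
  intro Hr.
  assert (Hp : 1 <= INR (S p)) by (rewrite S_INR; pose proof (pos_INR p); lra).
  set (e := (1 - r) / INR (S p)).
  assert (He : 0 < e <= 1 - r).
  { unfold e. split; [apply Rdiv_lt_0_compat; lra|].
    apply Rmult_le_reg_r with (INR (S p)); [lra|].
    unfold Rdiv. rewrite Rmult_assoc, Rinv_l by lra. nra. }
  set (t := 1 - e).
  assert (Hrt : r <= t ^ S p).
  { pose proof (bernoulli_ineq e (S p) ltac:(lra)) as Hbern. unfold t.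
    replace (INR (S p) * e) with (1 - r) in Hbern by (unfold e; field; lra). lra. }
  exists ((/ (1 - t)) ^ p). split; [apply pow_lt, Rinv_0_lt_compat; unfold t; lra|].
  intro n.
  pose proof (pow_le t n ltac:(unfold t; lra)).
  assert (Htn : t ^ n <= 1) by (rewrite <- (pow1 n); apply pow_incr; unfold t; lra).
  assert (Hrn : r ^ n <= (t ^ n) ^ p).
  { apply Rle_trans with ((t ^ S p) ^ n); [apply pow_incr; lra|].
    rewrite <- !pow_mult. replace (S p * n)%nat with (n * p + n)%nat by lia.
    rewrite pow_add. pose proof (pow_le t (n * p) ltac:(unfold t; lra)). nra. }
  apply Rle_trans with (INR (n + 1) ^ p * (t ^ n) ^ p).
  - apply Rmult_le_compat_l; [apply pow_le, pos_INR | exact Hrn].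
  - rewrite <- Rpow_mult_distr. apply pow_incr. split.
    + apply Rmult_le_pos; [apply pos_INR | assumption].
    + apply succ_mul_pow_le. unfold t; lra.
Qed.

Lemma infinite_sum_geom_dominated (T : nat -> R) (K r : R) : 0 <= r < 1 ->
  (forall s, 0 <= T s <= K * r ^ s) ->
  exists l, infinite_sum T l /\ T 0%nat <= l /\ l <= K / (1 - r).
Proof.
  intros Hr HT.
  assert (Hpartial : forall N, sum_f_R0 T N <= K / (1 - r)).
  { intro N. assert (HK : 0 <= K) by (pose proof (HT 0%nat); simpl in *; lra).
    apply Rle_trans with (sum_f_R0 (fun s => K * r ^ s) N).
    - apply sum_Rle. intros s _. apply HT.
    - rewrite (sum_eq _ (fun s => r ^ s * K)) by (intros; ring).
      rewrite <- scal_sum, tech3 by lra. pose proof (pow_le r (S N) ltac:(lra)).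
      unfold Rdiv. apply Rmult_le_compat_l; [exact HK|].
      rewrite <- (Rmult_1_l (/ (1 - r))) at 2.
      apply Rmult_le_compat_r; [left; apply Rinv_0_lt_compat |]; lra. }
  assert (Hgrow : Un_growing (sum_f_R0 T)).
  { intro n. rewrite tech5. pose proof (HT (S n)). lra. }
  assert (Hbound : has_ub (sum_f_R0 T)).
  { exists (K / (1 - r)). intros x [N ->]. apply Hpartial. }
  destruct (growing_cv _ Hgrow Hbound) as [l Hl].
  exists l. split; [exact Hl|]. split.
  - exact (growing_ineq _ _ Hgrow Hl 0%nat).
  - apply (Rle_cv_lim (Vn := fun _ => K / (1 - r)) Hpartial Hl).
    intros eps Heps. exists 0%nat. intros n _. unfold R_dist.
    rewrite Rminus_diag, Rabs_R0. exact Heps.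
Qed.

Lemma lambda_pref_eq (d k : nat) : (2 <= d)%nat ->
  lambda_pref d k = sqrt PI ^ (d - 1) / 2 ^ k.
Proof.
  intro Hd. unfold lambda_pref, sphere_area.
  pose proof (halfGamma_pos (d - 1) ltac:(lia)). pose proof (pow_lt 2 k ltac:(lra)).
  rewrite pow_add. simpl (2 ^ 1). field. lra.
Qed.

Lemma lambda_term_factor_le (d k s : nat) : (2 <= d)%nat ->
  INR (fact (2 * s + k)) / INR (fact (2 * s))
  * (halfGamma (2 * s + 1) / halfGamma (2 * s + 2 * k + d))
  <= 2 ^ k * sqrt PI / halfGamma d.
Proof.
  intro Hd. rewrite halfGamma_odd.
  pose proof (halfGamma_shift_ge d (s + k) Hd) as HX.
  replace (2 * (s + k) + d)%nat with (2 * s + 2 * k + d)%nat in HX by lia.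
  pose proof (fact_add_le s (s + k)) as Hfact.
  replace (s + (s + k))%nat with (2 * s + k)%nat in Hfact by lia.
  rewrite pow_add, pow_mult in Hfact. replace (2 ^ 2) with 4 in Hfact by ring.
  set (X := halfGamma (2 * s + 2 * k + d)) in *.
  pose proof (halfGamma_pos d ltac:(lia)).
  pose proof (INR_fact_lt_0 (s + k)). pose proof (INR_fact_lt_0 s).
  pose proof (INR_fact_lt_0 (2 * s)).
  pose proof (sqrt_lt_R0 PI PI_RGT_0).
  pose proof (pow_lt 4 s ltac:(lra)). pose proof (pow_lt 2 k ltac:(lra)).
  assert (HX0 : 0 < X) by nra.
  replace (INR (fact (2 * s + k)) / INR (fact (2 * s))
    * (INR (fact (2 * s)) * sqrt PI / (4 ^ s * INR (fact s)) / X))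
    with (INR (fact (2 * s + k)) * sqrt PI / (4 ^ s * INR (fact s) * X)) by (field; lra).
  apply Rdiv_le_cross; [apply Rmult_lt_0_compat; [apply Rmult_lt_0_compat|] | |]; try lra.
  apply Rle_trans
    with (4 ^ s * 2 ^ k * INR (fact s) * INR (fact (s + k)) * sqrt PI * halfGamma d).
  - apply Rmult_le_compat_r; [lra|]. apply Rmult_le_compat_r; lra.
  - replace (4 ^ s * 2 ^ k * INR (fact s) * INR (fact (s + k)) * sqrt PI * halfGamma d)
      with (2 ^ k * sqrt PI * 4 ^ s * INR (fact s) * (INR (fact (s + k)) * halfGamma d))
      by ring.
    replace (2 ^ k * sqrt PI * (4 ^ s * INR (fact s) * X))
      with (2 ^ k * sqrt PI * 4 ^ s * INR (fact s) * X) by ring.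
    apply Rmult_le_compat_l; [|exact HX].
    repeat apply Rmult_le_pos; lra.
Qed.

Section LambdaSummands.
Variables (d p : nat) (b : nat -> R) (r c1 c2 : R).
Hypothesis Hd : (2 <= d)%nat.
Hypothesis Hr : 0 < r.
Hypothesis Hc2 : 0 < c2.
Hypothesis Hb : forall m, c2 * r ^ m <= b m <= c1 * r ^ m.

Lemma lambda_summand_nonneg (k s : nat) : 0 <= lambda_pref d k * lambda_term d b (S p) k s.
Proof.
  unfold lambda_term. rewrite lambda_pref_eq by exact Hd.
  pose proof (coef_pow_nonneg b (S p) (2 * s + k)
                (coef_nonneg_of_geom_bounds b r c1 c2 Hr Hc2 Hb)).
  pose proof (INR_fact_lt_0 (2 * s + k)). pose proof (INR_fact_lt_0 (2 * s)).
  pose proof (halfGamma_pos (2 * s + 1) ltac:(lia)).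
  pose proof (halfGamma_pos (2 * s + 2 * k + d) ltac:(lia)).
  pose proof (pow_lt (sqrt PI) (d - 1) (sqrt_lt_R0 PI PI_RGT_0)).
  pose proof (pow_lt 2 k ltac:(lra)).
  apply Rmult_le_pos; [left; apply Rdiv_lt_0_compat; lra|].
  apply Rmult_le_pos; [apply Rmult_le_pos; [lra|] |]; left; apply Rdiv_lt_0_compat; lra.
Qed.

Lemma lambda_summand_le_coef (k s : nat) :
  lambda_pref d k * lambda_term d b (S p) k s
  <= sqrt PI ^ d / halfGamma d * coef_pow b (S p) (2 * s + k).
Proof.
  unfold lambda_term. rewrite lambda_pref_eq by exact Hd.
  pose proof (coef_pow_nonneg b (S p) (2 * s + k)
                (coef_nonneg_of_geom_bounds b r c1 c2 Hr Hc2 Hb)).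
  pose proof (lambda_term_factor_le d k s Hd).
  pose proof (pow_lt (sqrt PI) (d - 1) (sqrt_lt_R0 PI PI_RGT_0)).
  pose proof (pow_lt 2 k ltac:(lra)).
  pose proof (halfGamma_pos d ltac:(lia)).
  rewrite Rmult_assoc, <- Rmult_assoc.
  apply Rle_trans with (sqrt PI ^ (d - 1) / 2 ^ k * coef_pow b (S p) (2 * s + k)
                        * (2 ^ k * sqrt PI / halfGamma d)).
  - apply Rmult_le_compat_l; [apply Rmult_le_pos; [apply Rlt_le, Rdiv_lt_0_compat|] |]; lra.
  - rewrite (pow_pred (sqrt PI) d) by lia. right. field. lra.
Qed.

Lemma lambda_summand_le_geom (M : R) (k s : nat) :
  (forall n, INR (n + 1) ^ p * r ^ n <= M) ->
  lambda_pref d k * lambda_term d b (S p) k s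
  <= sqrt PI ^ d / halfGamma d * c1 ^ S p * (2 ^ p * M) * INR (k + 1) ^ p * r ^ k * r ^ s.
Proof.
  intro HM.
  assert (Hc1 : 0 < c1) by (pose proof (Hb 0%nat); simpl in *; lra).
  assert (HK : 0 < sqrt PI ^ d / halfGamma d).
  { apply Rdiv_lt_0_compat; [apply pow_lt, sqrt_lt_R0, PI_RGT_0 | apply halfGamma_pos; lia]. }
  eapply Rle_trans; [apply lambda_summand_le_coef|].
  rewrite !Rmult_assoc. apply Rmult_le_compat_l; [lra|]. rewrite <- !Rmult_assoc.
  eapply Rle_trans; [apply (coef_pow_le b r c1 c2 Hr Hc2 Hb)|].
  assert (Hpoly : INR (2 * s + k + 1) ^ p <= 2 ^ p * INR (k + 1) ^ p * INR (s + 1) ^ p).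
  { rewrite <- !Rpow_mult_distr. apply pow_incr. split; [apply pos_INR|].
    rewrite !plus_INR, mult_INR. pose proof (pos_INR k). pose proof (pos_INR s).
    assert (0 <= INR k * INR s) by (apply Rmult_le_pos; assumption). simpl. lra. }
  replace (r ^ (2 * s + k)) with (r ^ k * r ^ s * r ^ s)
    by (rewrite <- !pow_add; f_equal; lia).
  pose proof (HM s). pose proof (pow_lt r k Hr). pose proof (pow_lt r s Hr).
  pose proof (pow_lt c1 (S p) Hc1). pose proof (pow_le (INR (k + 1)) p (pos_INR _)).
  pose proof (pow_lt 2 p ltac:(lra)).
  assert (Hfront : 0 <= c1 ^ S p * (r ^ k * r ^ s * r ^ s))
    by (repeat apply Rmult_le_pos; try apply pow_le; lra).
  apply Rle_trans with (c1 ^ S p * (r ^ k * r ^ s * r ^ s)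
                        * (2 ^ p * INR (k + 1) ^ p * INR (s + 1) ^ p)).
  - apply Rmult_le_compat_l; assumption.
  - replace (c1 ^ S p * (r ^ k * r ^ s * r ^ s) * (2 ^ p * INR (k + 1) ^ p * INR (s + 1) ^ p))
      with (c1 ^ S p * 2 ^ p * INR (k + 1) ^ p * r ^ k * r ^ s * (INR (s + 1) ^ p * r ^ s))
      by ring.
    apply Rle_trans with (c1 ^ S p * 2 ^ p * INR (k + 1) ^ p * r ^ k * r ^ s * M);
      [apply Rmult_le_compat_l; [|lra] | right; ring].
    repeat apply Rmult_le_pos; try apply pow_le; try apply pos_INR; lra.
Qed.

Lemma lambda_summand0_ge (k : nat) :
  sqrt PI ^ d * c2 ^ S p / (halfGamma d * 2 ^ d) * (r / 4) ^ k
  <= lambda_pref d k * lambda_term d b (S p) k 0.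
Proof.
  unfold lambda_term. rewrite lambda_pref_eq by exact Hd.
  replace (2 * 0 + k)%nat with k by lia. replace (2 * 0 + 1)%nat with 1%nat by lia.
  replace (2 * 0 + 2 * k + d)%nat with (2 * k + d)%nat by lia.
  change (halfGamma 1) with (sqrt PI). change (INR (fact (2 * 0))) with 1.
  pose proof (halfGamma_shift_le_pow d k Hd) as HG.
  pose proof (coef_pow_ge b r c1 c2 Hr Hc2 Hb p k) as Hcoef.
  pose proof (halfGamma_pos (2 * k + d) ltac:(lia)). pose proof (halfGamma_pos d ltac:(lia)).
  pose proof (INR_fact_lt_0 k). pose proof (sqrt_lt_R0 PI PI_RGT_0).
  pose proof (pow_lt (sqrt PI) (d - 1) ltac:(lra)).
  pose proof (pow_lt 2 k ltac:(lra)). pose proof (pow_lt 2 d ltac:(lra)).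
  pose proof (pow_lt r k Hr). pose proof (pow_lt c2 (S p) Hc2).
  set (A := sqrt PI ^ (d - 1) / 2 ^ k * INR (fact k) * sqrt PI).
  assert (HA : 0 < A).
  { unfold A.
    apply Rmult_lt_0_compat; [apply Rmult_lt_0_compat; [apply Rdiv_lt_0_compat|] |]; lra. }
  replace (sqrt PI ^ (d - 1) / 2 ^ k
           * (coef_pow b (S p) k * (INR (fact k) / 1) * (sqrt PI / halfGamma (2 * k + d))))
    with (A * coef_pow b (S p) k * / halfGamma (2 * k + d)) by (unfold A; field; lra).
  apply Rle_trans with (A * (c2 ^ S p * r ^ k) * / (2 ^ (k + d) * INR (fact k) * halfGamma d)).
  - unfold A. rewrite (pow_pred (sqrt PI) d), pow_add by lia. unfold Rdiv.
    rewrite Rpow_mult_distr, pow_inv.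
    replace (4 ^ k) with (2 ^ k * 2 ^ k) by (rewrite <- Rpow_mult_distr; f_equal; ring).
    right. field. lra.
  - apply Rmult_le_compat.
    + apply Rmult_le_pos; [lra | apply Rmult_le_pos; lra].
    + left. apply Rinv_0_lt_compat. pose proof (pow_lt 2 (k + d) ltac:(lra)).
      repeat apply Rmult_lt_0_compat; lra.
    + apply Rmult_le_compat_l; lra.
    + apply Rinv_le_contravar; [lra | exact HG].
Qed.

End LambdaSummands.

Theorem mainTheorem4 :
  forall (d : nat), (2 <= d)%nat ->
  forall (r c1 c2 : R), 0 < r -> r < 1 -> 0 < c2 -> c2 <= c1 ->
  forall (alpha : nat), (1 <= alpha)%nat ->
  exists C1 C2 : R, 0 < C1 /\ 0 < C2 /\
    forall (f1 : R -> R) (b : nat -> R),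
      (forall t, -1 <= t <= 1 -> infinite_sum (fun m => b m * t ^ m) (f1 t)) ->
      (forall m, c2 * r ^ m <= b m <= c1 * r ^ m) ->
      forall m : nat, exists l : R,
        is_lambda d b alpha m l /\
        C2 * (r / 4) ^ m <= l /\
        l <= C1 * INR (m + 1) ^ (alpha - 1) * r ^ m.
Proof.
  intros d Hd r c1 c2 Hr Hr1 Hc2 Hc12 alpha Halpha.
  destruct alpha as [|p]; [lia|]. replace (S p - 1)%nat with p by lia.
  destruct (pow_mul_geom_bounded r p ltac:(lra)) as [M [HM0 HM]].
  pose proof (pow_lt (sqrt PI) d (sqrt_lt_R0 PI PI_RGT_0)).
  pose proof (halfGamma_pos d ltac:(lia)).
  pose proof (pow_lt c1 (S p) ltac:(lra)). pose proof (pow_lt c2 (S p) Hc2).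
  pose proof (pow_lt 2 p ltac:(lra)). pose proof (pow_lt 2 d ltac:(lra)).
  exists (sqrt PI ^ d / halfGamma d * c1 ^ S p * (2 ^ p * M) / (1 - r)),
         (sqrt PI ^ d * c2 ^ S p / (halfGamma d * 2 ^ d)).
  split.
  { apply Rdiv_lt_0_compat; [|lra].
    apply Rmult_lt_0_compat; [apply Rmult_lt_0_compat; [apply Rdiv_lt_0_compat|] |
                              apply Rmult_lt_0_compat]; lra. }
  split; [apply Rdiv_lt_0_compat; apply Rmult_lt_0_compat; lra|].
  intros f1 b _ Hb k.
  destruct (infinite_sum_geom_dominated (fun s => lambda_pref d k * lambda_term d b (S p) k s)
              (sqrt PI ^ d / halfGamma d * c1 ^ S p * (2 ^ p * M) * INR (k + 1) ^ p * r ^ k) r)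
    as [l [Hl [Hl0 HlK]]].
  - lra.
  - intro s. split.
    + exact (lambda_summand_nonneg d p b r c1 c2 Hd Hr Hc2 Hb k s).
    + exact (lambda_summand_le_geom d p b r c1 c2 Hd Hr Hc2 Hb M k s HM).
  - exists l. split; [exact Hl|]. split.
    + exact (Rle_trans _ _ _ (lambda_summand0_ge d p b r c1 c2 Hd Hr Hc2 Hb k) Hl0).
    + eapply Rle_trans; [exact HlK|]. right. field. lra.
Qed.
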